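(* Let $P$ be a real polynomial of degree $d$. Let $B$ be a set of $|B|=100d^2$ equally spaced points in $[0,1]$, and let $A\subseteq B$ with $|A|\ge 0.98|B|$. If $|P(x)|\le1$ for every $x\in A$, then $|P(x)|\le 2^{O(d)}$ for all $x\in[0,1]$. *)

From mathcomp Require Import all_boot all_order all_algebra.
From mathcomp Require Import reals.
Set Implicit Arguments. Unset Strict Implicit. Unset Printing Implicit Defensive.
Import Order.TTheory GRing.Theory Num.Theory.
Local Open Scope ring_scope.

Definition equi_pt (R : realType) (N : nat) (i : 'I_N) : R :=
  (nat_of_ord i)%:R / (N.-1)%:R.

From mathcomp Require Import all_boot all_order all_algebra.
From mathcomp Require Import reals sequences exp.
From mathcomp Require Import lra zify.
Set Implicit Arguments. Unset Strict Implicit. Unset Printing Implicit Defensive.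
Import Order.TTheory GRing.Theory Num.Theory.

(* Since |A| >= 0.98 |B| > 50 d^2, keeping every (50 d)-th element of A in increasing
   order gives d + 1 nodes t_0 < ... < t_d in A with |t_i - t_j| >= |i - j| / (2 d).
   Lagrange interpolation at nodes with |t_i - t_j| >= |i - j| delta bounds a polynomial of
   degree d which is at most 1 on the nodes by
   sum_i prod_(j <> i) 1 / (|i - j| delta) = 2^d / (d! delta^d) on [0,1]; for
   delta = 1 / (2 d) this is 4^d d^d / d! <= 16^d, as d^d / d! <= e^d. *)

Lemma sorted_ltn_nth_addn (s : seq nat) k l : sorted ltn s -> k <= l < size s ->
  nth 0 s k + (l - k) <= nth 0 s l.
Proof.
move=> s_sorted /andP[]; elim: l => [|l IHl] kl ls.
  by move: kl; rewrite leqn0 => /eqP ->; rewrite addn0.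
have [->|kl'] := eqVneq k l.+1; first by rewrite subnn addn0.
have {}kl : k <= l by rewrite -ltnS ltn_neqAle kl' kl.
have nth_lt : nth 0 s l < nth 0 s l.+1.
  by apply: (sorted_ltn_nth ltn_trans); rewrite ?inE // ltnW.
have := IHl kl (ltnW ls); lia.
Qed.

Lemma sorted_val_enum N (A : {set 'I_N}) : sorted ltn (map val (enum A)).
Proof.
have -> : enum A = [seq x <- enum 'I_N | x \in A].
  by rewrite {2}/enum_mem -filter_predI; apply: eq_filter => x; rewrite /= andbT.
rewrite sorted_map; apply: sorted_filter; first by move=> ? ? ?; apply: ltn_trans.
by rewrite -sorted_map val_enum_ord iota_ltn_sorted.
Qed.

Lemma spaced_points_of_dense N (A : {set 'I_N}) n m : n * m < #|A| ->
  exists f : 'I_n.+1 -> 'I_N,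
    (forall i, f i \in A) /\ (forall i j : 'I_n.+1, `|i - j| * m <= `|f i - f j|).
Proof.
move=> A_big; have [x0 x0A] : exists x0, x0 \in A.
  by apply/card_gt0P; apply: leq_ltn_trans A_big.
have im_lt i : i < n.+1 -> i * m < size (enum A).
  by move=> lti; rewrite -cardE (leq_ltn_trans _ A_big) // leq_mul2r -ltnS lti orbT.
exists (fun i => nth x0 (enum A) (i * m)); split=> [i|i j].
  by rewrite -mem_enum mem_nth ?im_lt.
wlog ij : i j / i <= j.
  by move=> gap; case: (leqP i j) => [/gap //|/ltnW/gap]; rewrite distnC [X in _ <= X]distnC.
have := @sorted_ltn_nth_addn _ (i * m) (j * m) (sorted_val_enum A).
rewrite size_map !(nth_map x0) ?im_lt // leq_mul2r ij orbT => /(_ isT) /= gap.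
by rewrite !distnEr ?mulnBl; lia.
Qed.

Lemma prod_distn n (i : 'I_n.+1) :
  \prod_(j < n.+1 | j != i) `|i - j| = i`! * (n - i)`!.
Proof.
rewrite -(big_mkord (fun j => j != i) (fun j => `|i - j|)).
rewrite (@big_cat_nat _ _ _ i); [|by []|by rewrite ltnW].
rewrite (big_ltn_cond (m:=i)) ?ltn_ord // eqxx /=.
congr (_ * _).
  rewrite -ffactnn ffact_prod big_mkord.
  by apply: eq_big => [j|j _]; rewrite ?ltn_eqF ?distnEl // ltnW.
rewrite fact_prod !big_add1 (big_addn 0) /= !big_mkord.
apply: eq_big => [j|j _]; first by rewrite gtn_eqF // ltnS leq_addl.
by rewrite -addSn distnEr ?addnK // leq_addl.
Qed.

Local Open Scope ring_scope.

Lemma horner_lagrange (F : fieldType) n (x : 'I_n -> F) (p : {poly F}) y :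
    injective x -> (size p <= n)%N ->
  p.[y] = \sum_(i < n) p.[x i] * \prod_(j < n | j != i) ((y - x j) / (x i - x j)).
Proof.
move=> x_inj sp.
pose L i := \prod_(j < n | j != i) ('X - (x j)%:P).
have size_L i : size (L i) = n.
  rewrite /L -big_enum size_prod_XsubC -cardE cardC1 card_ord prednK //.
  exact: leq_ltn_trans (leq0n i) (ltn_ord i).
have L_sample i k : i != k -> (L i).[x k] = 0.
  by move=> ik; rewrite horner_prod (bigD1 k) 1?eq_sym //= hornerXsubC subrr mul0r.
have L_diag i : (L i).[x i] != 0.
  rewrite horner_prod prodf_seq_neq0; apply/allP => j _; apply/implyP => ji.
  by rewrite hornerXsubC subr_eq0 (inj_eq x_inj) eq_sym.
pose q := \sum_(i < n) (p.[x i] / (L i).[x i]) *: L i.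
have q_sample k : q.[x k] = p.[x k].
  rewrite horner_sum (bigD1 k) //= hornerZ divfK // big1 ?addr0 // => i ik.
  by rewrite hornerZ (L_sample i k ik) mulr0.
have p_eq_q : p = q.
  apply/subr0_eq.
  apply: (@roots_geq_poly_eq0 _ _ [seq x i | i <- enum 'I_n]).
  - by apply/allP => _ /mapP[k _ ->]; rewrite /root hornerD hornerN q_sample subrr.
  - by rewrite map_inj_uniq ?enum_uniq.
  rewrite size_map size_enum_ord (leq_trans (size_polyD _ _)) // size_polyN geq_max sp /=.
  apply: leq_trans (size_sum _ _ _) _; apply/bigmax_leqP => i _.
  by rewrite (leq_trans (size_scale_leq _ _)) ?size_L.
rewrite {1}p_eq_q horner_sum; apply: eq_bigr => i _.
rewrite hornerZ !horner_prod -mulrA -prodfV -big_split /=; congr (_ * _).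
by apply: eq_bigr => j _; rewrite !hornerXsubC mulrC.
Qed.

Lemma sum_inv_fact_mul (F : numFieldType) n :
  \sum_(i < n.+1) ((i`! * (n - i)`!)%:R : F)^-1 = 2 ^+ n / n`!%:R.
Proof.
have -> : 2 ^+ n = \sum_(i < n.+1) ('C(n, i)%:R : F).
  by rewrite -[2]/(1 + 1 : F) exprDn; apply: eq_bigr => i _; rewrite !expr1n mul1r.
rewrite mulr_suml; apply: eq_bigr => i _.
rewrite -(bin_fact (ltn_ord i : (i <= n)%N)) [in RHS]natrM [in RHS]invfM mulrA mulfV ?mul1r //.
by rewrite pnatr_eq0 -lt0n bin_gt0 -ltnS.
Qed.

Lemma lagrange_norm_bound (R : realFieldType) n (t : 'I_n.+1 -> R)
    (p : {poly R}) (delta y : R) :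
    0 < delta -> (size p <= n.+1)%N ->
    (forall i j : 'I_n.+1, `|i - j|%N%:R * delta <= `|t i - t j|) ->
    (forall i, `|p.[t i]| <= 1) -> (forall i, `|y - t i| <= 1) ->
  `|p.[y]| <= 2 ^+ n / (n`!%:R * delta ^+ n).
Proof.
move=> delta_gt0 sp sep pt yt.
have t_inj : injective t.
  move=> i j tij; apply/val_inj/eqP; rewrite -distn_eq0 -(lern0 R).
  by have := sep i j; rewrite tij subrr normr0 pmulr_lle0.
have factor i j : j != i ->
    0 <= `|(y - t j) / (t i - t j)| <= (`|i - j|%N%:R * delta)^-1.
  move=> ji; rewrite normr_ge0 /=; have sep_gt0 : 0 < `|i - j|%N%:R * delta.
    by rewrite mulr_gt0 // ltr0n lt0n distn_eq0 eq_sym.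
  rewrite normf_div -[leRHS]mul1r ler_pdivrMr; last exact: lt_le_trans (sep i j).
  rewrite mulrAC ler_pdivlMr // mul1r; apply: le_trans (sep i j).
  exact: ler_piMl (ltW sep_gt0) (yt j).
rewrite (horner_lagrange _ t_inj sp) invfM mulrA -sum_inv_fact_mul mulr_suml.
apply: le_trans (ler_norm_sum _ _ _) (ler_sum _ _) => i _.
rewrite normrM -[leRHS]mul1r; apply: ler_pM => //; rewrite normr_prod.
apply: le_trans (ler_prod _ (factor i)) _.
by rewrite prodfV big_split /= -natr_prod prod_distn prodr_const cardC1 card_ord invfM.
Qed.

Lemma expR_le_invr1B (R : realType) (x : R) : x < 1 -> expR x <= (1 - x)^-1.
Proof.
move=> x_lt1; rewrite -[expR x]invrK lef_pV2 ?posrE ?invr_gt0 ?expR_gt0 ?subr_gt0 //.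
by rewrite -expRN expR_ge1Dx.
Qed.

Lemma expR_natr_le (R : realType) n : expR (n%:R : R) <= 4 ^+ n.
Proof.
have -> : (n%:R : R) = (2 * n)%N%:R * 2^-1 by rewrite natrM mulrAC mulfV ?mul1r ?pnatr_eq0.
have -> : (4 : R) = 2 ^+ 2 by rewrite expr2 -natrM.
rewrite expRM_natl exprM; apply: lerXn2r; rewrite ?nnegrE ?exprn_ge0 ?expR_ge0 //.
apply: lerXn2r; rewrite ?nnegrE ?expR_ge0 //.
by apply: le_trans (expR_le_invr1B _) _; [lra | rewrite (_ : 1 - 2^-1 = 2^-1) ?invrK //; lra].
Qed.

Lemma expnn_le_fact (R : realType) n : (n%:R : R) ^+ n <= 4 ^+ n * n`!%:R.
Proof.
case: n => [|n]; first by rewrite expr0 mul1r fact0.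
rewrite -ler_pdivrMr ?ltr0n ?fact_gt0 //.
apply: le_trans (expR_natr_le R n.+1).
by apply: le_trans (expR_ge1Dxn n (ler0n R n.+1)); rewrite lerDr.
Qed.

Lemma exp2_div_fact_inv2n_le (R : realType) n :
  2 ^+ n / (n`!%:R * (2 * n)%N%:R^-1 ^+ n) <= 2 ^+ (4 * n) :> R.
Proof.
have four : (4 : R) ^+ n = 2 ^+ (2 * n)%N by rewrite exprM expr2 -natrM.
rewrite exprVn invfM invrK mulrCA ler_pdivrMl ?ltr0n ?fact_gt0 //.
rewrite natrM exprMn mulrA -exprD addnn -mul2n (_ : 4 * n = 2 * n + 2 * n)%N; last by lia.
by rewrite exprD mulrCA ler_pM2l ?exprn_gt0 // -four mulrC expnn_le_fact.
Qed.

Lemma equi_pt_itv (R : realType) N (i : 'I_N) : 0 <= equi_pt R i <= 1.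
Proof.
rewrite /equi_pt divr_ge0 //=; case: N i => [[] //|N] i /=.
have [N0|N_gt0] := posnP N; first by rewrite (_ : N%:R = 0 :> R) ?invr0 ?mulr0 ?ler01 // N0.
by rewrite ler_pdivrMr ?ltr0n // mul1r ler_nat -ltnS.
Qed.

Lemma distr_equi_pt (R : realType) N (i j : 'I_N) :
  `|equi_pt R i - equi_pt R j| = `|i - j|%N%:R / N.-1%:R.
Proof. by rewrite /equi_pt -mulrBl normrM normfV normr_nat natr_absz intr_norm rmorphB. Qed.

Theorem lemma6 :
  exists C : nat,
  forall (R : realType) (d : nat) (P : {poly R}),
    (1 <= d)%N ->
    size P = d.+1 ->
    forall A : {set 'I_(100 * d ^ 2)},
      (49 * (100 * d ^ 2) <= 50 * #|A|)%N ->
      (forall i, i \in A -> `|P.[equi_pt R i]| <= 1) ->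
      forall x : R, 0 <= x <= 1 -> `|P.[x]| <= 2 ^+ (C * d).
Proof.
exists 4%N => R d P d_gt0 sizeP A A_dense P_le1 y y01.
have A_big : (d * (50 * d) < #|A|)%N by move: #|A| A_dense => a; rewrite -mulnn; nia.
have [f [fA f_sep]] := spaced_points_of_dense A_big.
have N_gt0 : (0 < (100 * d ^ 2).-1)%N by rewrite -mulnn; nia.
have d2_gt0 : (0 < 2 * d)%N by rewrite muln_gt0.
apply: le_trans (exp2_div_fact_inv2n_le R d).
apply: (lagrange_norm_bound (t := fun i => equi_pt R (f i))) => [| |i j|i|i].
- by rewrite invr_gt0 ltr0n.
- by rewrite sizeP.
- rewrite distr_equi_pt.
  apply: le_trans (_ : (`|i - j| * (50 * d))%N%:R / (100 * d ^ 2).-1%:R <= _); last first.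
    by rewrite ler_pM2r ?invr_gt0 ?ltr0n // ler_nat.
  rewrite ler_pdivlMr ?ltr0n // mulrAC ler_pdivrMr ?ltr0n //.
  by rewrite -!natrM ler_nat -mulnA leq_mul2l -mulnn; apply/orP; right; nia.
- exact/P_le1/fA.
- move: (equi_pt_itv R (f i)) y01 => /andP[? ?] /andP[? ?].
  by rewrite ler_norml; apply/andP; split; lra.
Qed.
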